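(* Let $\Omega=\{\Omega_1,\dots,\Omega_N\}$ be a finite set of points with distance function $d$, let $1\le n<N$, and let $i,j\in\{1,\dots,n\}$. Let $x_1=MMJ(\Omega_i,\Omega_j~|~\Omega_{[1,n]})$, $t_1=MMJ(\Omega_{n+1},\Omega_i~|~\Omega_{[1,n+1]})$, $t_2=MMJ(\Omega_{n+1},\Omega_j~|~\Omega_{[1,n+1]})$ and $x_2=\max(t_1,t_2)$. Then $MMJ(\Omega_i,\Omega_j~|~\Omega_{[1,n+1]})=\min(x_1,x_2)$.
   Context: $\Omega$ is a finite set of points indexed $\Omega_1,\dots,\Omega_N$, and $\Omega_{[1,n]}=\{\Omega_1,\dots,\Omega_n\}$. $d:\Omega\times\Omega\to[0,\infty)$ is a distance function (e.g. Euclidean distance), symmetric with $d(x,x)=0$. For a subset $S\subseteq\Omega$, a path from $i$ to $j$ in $S$ is a finite sequence of points of $S$ (at least two) starting at $i$ and ending at $j$, with no repeated points except that start and end may coincide when $i=j$. A jump of a path is the distance $d(x,y)$ between two consecutive points $x,y$, and $max\_jump$ of a path is its largest jump. The Min-Max-Jump distance with context $S$ is $MMJ(i,j~|~S)=\min\{max\_jump(\epsilon): \epsilon \text{ a path from } i \text{ to } j \text{ in } S\}$ for $i,j\in S$, with $MMJ(i,i~|~S)=0$. *)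

From HB Require Import structures.
From mathcomp Require Import all_boot all_order all_algebra.
From mathcomp Require Import boolp classical_sets reals.
Set Implicit Arguments. Unset Strict Implicit. Unset Printing Implicit Defensive.
Import Order.TTheory GRing.Theory Num.Theory.
Local Open Scope ring_scope.
Local Open Scope classical_set_scope.

Section MMJ.
Variables (R : realType) (N : nat) (d : 'I_N -> 'I_N -> R).

(* The point Omega_{k+1} is represented by its (0-based) index k : 'I_N. *)

(* Omega_[1,n] = {Omega_1,...,Omega_n} = indices 0,...,n-1. *)
Definition Omega_upto (n : nat) : {pred 'I_N} := [pred k : 'I_N | k < n]%N.

(* A path from i to j in S: the sequence i :: p, at least two points,
   ending at j, all in S, with no repeated points except that the first and
   last may coincide (only possible when i = j). *)
Definition is_path_in (S : {pred 'I_N}) (i j : 'I_N) (s : seq 'I_N) : bool :=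
  if s is x :: p then
    [&& x == i, p != [::], last x p == j, all (mem S) s,
        uniq (belast x p) & uniq p]
  else false.

(* largest jump d(x,y) between consecutive points (distances are >= 0) *)
Definition max_jump (s : seq 'I_N) : R :=
  \big[Num.max/0]_(xy <- zip s (behead s)) d xy.1 xy.2.

(* MMJ(i,j | S): minimum of max_jump over all paths from i to j in S;
   0 when i = j. (The set of paths is finite, so inf is a minimum.) *)
Definition MMJ (i j : 'I_N) (S : {pred 'I_N}) : R :=
  if i == j then 0
  else inf [set max_jump s | s in [set s | is_path_in S i j s]].
End MMJ.

From HB Require Import structures.
From mathcomp Require Import all_boot all_order all_algebra.
From mathcomp Require Import boolp classical_sets reals.
Import Order.TTheory GRing.Theory Num.Theory.
Local Open Scope ring_scope.

(* A path from i to j in the context Omega_[1,n+1] either avoids the new point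
   Omega_{n+1}, and then lies in Omega_[1,n], or passes through it and splits
   into two pieces joining Omega_{n+1} to i and to j; this gives the lower
   bound min(x1, x2).  For the upper bound, MMJ can only decrease when the
   context grows, and it satisfies the ultrametric inequality
   MMJ(x,z) <= max(MMJ(x,y), MMJ(y,z)).  The argument works with walks, in
   which points may repeat, so that walks can be concatenated and reversed;
   a walk can always be shortened to a path with no larger jumps. *)

Set Implicit Arguments.
Unset Strict Implicit.
Unset Printing Implicit Defensive.

Section MMJWalks.
Local Open Scope classical_set_scope.

Variables (R : realType) (N : nat) (d : 'I_N -> 'I_N -> R).
Hypothesis d_ge0 : forall x y, 0 <= d x y.
Hypothesis d_sym : forall x y, d x y = d y x.

Implicit Types (S : {pred 'I_N}) (x y z : 'I_N) (q : seq 'I_N) (m c : R).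

Lemma max_jump_ge0 s : 0 <= max_jump d s.
Proof.
apply: (big_ind (fun v => 0 <= v)) => // a b a0 b0.
by rewrite le_max a0.
Qed.

Lemma max_jump_cons_le m x q :
  (max_jump d (x :: q) <= m) = (0 <= m) && path (fun a b => d a b <= m) x q.
Proof.
elim: q x => [|y q IHq] x; first by rewrite /max_jump big_nil andbT.
rewrite /max_jump /= big_cons ge_max -/(max_jump d (y :: q)) IHq /=.
by case: (d x y <= m); case: (0 <= m).
Qed.

Definition walk S m x y q :=
  [&& path (fun a b => d a b <= m) x q, last x q == y & all (mem S) (x :: q)].

Lemma walk_nil S m x : x \in S -> walk S m x x [::].
Proof. by rewrite /walk /= eqxx andbT. Qed.

Lemma walk_le S m m' x y q : m <= m' -> walk S m x y q -> walk S m' x y q.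
Proof.
rewrite /walk => le_mm' /and3P[wq -> ->]; rewrite !andbT.
by apply: sub_path wq => a b /le_trans; apply.
Qed.

Lemma walk_sub_in S S' m x y q :
  (forall z, z \in x :: q -> z \in S -> z \in S') ->
  walk S m x y q -> walk S' m x y q.
Proof.
rewrite /walk => sub /and3P[-> -> /allP qS].
by apply/allP => z zq; apply: sub zq (qS z zq).
Qed.

Lemma walk_rev S m x y q : walk S m x y q -> walk S m y x (rev (belast x q)).
Proof.
move=> /and3P[wq /eqP <- qS]; apply/and3P; split.
- by rewrite rev_path; apply: sub_path wq => a b; rewrite /= d_sym.
- case/lastP: q {wq qS} => [|q z] //=.
  by rewrite belast_rcons rev_cons last_rcons.
- apply/allP => z; rewrite in_cons mem_rev => /predU1P[->|zq].
    by apply: (allP qS); rewrite mem_last.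
  by apply: (allP qS); apply: mem_belast zq.
Qed.

Lemma walk_cat S m x y z q1 q2 :
  walk S m x y q1 -> walk S m y z q2 -> walk S m x z (q1 ++ q2).
Proof.
move=> /and3P[wq1 /eqP q1y q1S] /and3P[wq2 q2z /= /andP[_ q2S]].
by rewrite /walk cat_path last_cat q1y wq1 wq2 q2z -cat_cons all_cat q1S.
Qed.

Lemma walk_split S m x y z q1 q2 :
  walk S m x y (q1 ++ z :: q2) -> walk S m x z (rcons q1 z) /\ walk S m z y q2.
Proof.
rewrite /walk -cat_rcons cat_path last_cat last_rcons -cat_cons all_cat.
move=> /and3P[/andP[wq1 wq2] -> /andP[q1S q2S]].
rewrite wq1 wq2 eqxx q1S /= q2S andbT; split => //.
by apply: (allP q1S); rewrite in_cons mem_rcons mem_head orbT.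
Qed.

Lemma path_in_walk S x y s :
  is_path_in S x y s -> exists q, s = x :: q /\ walk S (max_jump d s) x y q.
Proof.
case: s => [|x' q] //= /and3P[/eqP-> _ /andP[qy /andP[qS _]]].
exists q; split => //; rewrite /walk /= qy qS !andbT.
by move: (lexx (max_jump d (x :: q))); rewrite max_jump_cons_le => /andP[].
Qed.

Lemma walk_shorten S m x y q : 0 <= m -> x != y -> walk S m x y q ->
  exists2 s, is_path_in S x y s & max_jump d s <= m.
Proof.
move=> m0 neq_xy /and3P[wq /eqP qy qS]; move: qy neq_xy.
case: (shortenP wq) => p wp uxp sub_pq py neq_xy.
have p0 : p != [::] by case: p {wp uxp sub_pq} py neq_xy => //= ->; rewrite eqxx.
have pS : all (mem S) (x :: p).
  apply/allP => z /predU1P[->|/sub_pq zq]; apply: (allP qS); first exact: mem_head.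
  by rewrite in_cons zq orbT.
have ubp : uniq (belast x p) by move: uxp; rewrite lastI rcons_uniq => /andP[].
exists (x :: p); last by rewrite max_jump_cons_le m0.
rewrite /= eqxx p0 py eqxx -/(all (mem S) (x :: p)) pS ubp.
by case/andP: uxp.
Qed.

Lemma MMJ_paths_neq0 S x y : x != y -> x \in S -> y \in S ->
  [set max_jump d s | s in [set s | is_path_in S x y s]] !=set0.
Proof.
move=> neq_xy xS yS; exists (max_jump d [:: x; y]); exists [:: x; y] => //.
by rewrite /= eqxx xS yS eqxx andbT.
Qed.

Lemma MMJ_paths_lbound S x y :
  has_lbound [set max_jump d s | s in [set s | is_path_in S x y s]].
Proof. by exists 0 => _ [s _ <-]; apply: max_jump_ge0. Qed.

Lemma MMJ_le_walk S m x y q : 0 <= m -> walk S m x y q -> MMJ d x y S <= m.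
Proof.
move=> m0 wq; rewrite /MMJ; case: eqVneq => [//|neq_xy].
have [s ps sm] := walk_shorten m0 neq_xy wq.
by apply: le_trans sm; apply: (ge_inf (MMJ_paths_lbound S x y)); exists s.
Qed.

Lemma MMJ_ge_walks S x y c : x \in S -> y \in S ->
  (forall m q, 0 <= m -> walk S m x y q -> c <= m) -> c <= MMJ d x y S.
Proof.
move=> xS yS c_le; rewrite /MMJ; case: eqVneq => [eq_xy|neq_xy].
  by apply: (c_le 0 [::] (lexx 0)); rewrite -eq_xy walk_nil.
apply: lb_le_inf; first exact: MMJ_paths_neq0.
move=> _ [s ps <-]; have [q [_ wq]] := path_in_walk ps.
exact: c_le (max_jump_ge0 s) wq.
Qed.

Lemma MMJ_lt_walk S x y c : x \in S -> y \in S -> MMJ d x y S < c ->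
  exists2 m, 0 <= m < c & exists q, walk S m x y q.
Proof.
move=> xS yS; rewrite /MMJ; case: eqVneq => [<- c0|neq_xy].
  by exists 0; [rewrite lexx c0 | exists [::]; apply: walk_nil].
case/(inf_lt (MMJ_paths_neq0 neq_xy xS yS)) => _ [s ps <-] sc.
have [q [_ wq]] := path_in_walk ps.
by exists (max_jump d s); [rewrite max_jump_ge0 | exists q].
Qed.

Lemma MMJ_sym S x y : x \in S -> y \in S -> MMJ d x y S = MMJ d y x S.
Proof.
have MMJ_le_sym u v : u \in S -> v \in S -> MMJ d u v S <= MMJ d v u S.
  move=> uS vS; apply: MMJ_ge_walks => // m q m0 wq.
  exact: MMJ_le_walk m0 (walk_rev wq).
by move=> xS yS; apply/eqP; rewrite eq_le !MMJ_le_sym.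
Qed.

Lemma MMJ_subset S S' x y : {subset S <= S'} -> x \in S -> y \in S ->
  MMJ d x y S' <= MMJ d x y S.
Proof.
move=> sub xS yS; apply: MMJ_ge_walks => // m q m0 wq.
by apply: MMJ_le_walk m0 (walk_sub_in _ wq) => z _ /sub.
Qed.

Lemma MMJ_le_max S x y z : x \in S -> y \in S -> z \in S ->
  MMJ d x z S <= Num.max (MMJ d x y S) (MMJ d y z S).
Proof.
move=> xS yS zS; rewrite leNgt gt_max; apply/negP => /andP[xy_lt yz_lt].
have [m1 /andP[m1_0 m1_lt] [q1 wq1]] := MMJ_lt_walk xS yS xy_lt.
have [m2 /andP[_ m2_lt] [q2 wq2]] := MMJ_lt_walk yS zS yz_lt.
set m := Num.max m1 m2.
have le_m1 : m1 <= m by rewrite le_max lexx.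
have le_m2 : m2 <= m by rewrite le_max lexx orbT.
have wq := walk_cat (walk_le le_m1 wq1) (walk_le le_m2 wq2).
have := MMJ_le_walk (le_trans m1_0 le_m1) wq.
by rewrite leNgt gt_max m1_lt m2_lt.
Qed.

End MMJWalks.

Lemma mem_Omega_uptoS N n (nN : (n < N)%N) (k : 'I_N) :
  (k \in Omega_upto n.+1) = (k == Ordinal nN) || (k \in Omega_upto n).
Proof. by rewrite !inE ltnS leq_eqVlt -val_eqE. Qed.

Theorem theorem3p5 (R : realType) (N : nat) (d : 'I_N -> 'I_N -> R)
  (d_ge0 : forall x y, 0 <= d x y) (d_sym : forall x y, d x y = d y x)
  (d_refl : forall x, d x x = 0)
  (n : nat) (n_ge1 : (1 <= n)%N) (nN : (n < N)%N)
  (i j : 'I_N) (hi : (i < n)%N) (hj : (j < n)%N) :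
  let p := Ordinal nN in (* the point Omega_{n+1} *)
  let x1 := MMJ d i j (Omega_upto n) in
  let t1 := MMJ d p i (Omega_upto n.+1) in
  let t2 := MMJ d p j (Omega_upto n.+1) in
  let x2 := Num.max t1 t2 in
  MMJ d i j (Omega_upto n.+1) = Num.min x1 x2.
Proof.
move=> p x1 t1 t2 x2.
have iS : i \in Omega_upto n by [].
have jS : j \in Omega_upto n by [].
have S'E k : (k \in Omega_upto n.+1) = (k == p) || (k \in Omega_upto n).
  exact: mem_Omega_uptoS.
have pS' : p \in Omega_upto n.+1 by rewrite S'E eqxx.
have iS' : i \in Omega_upto n.+1 by rewrite S'E iS orbT.
have jS' : j \in Omega_upto n.+1 by rewrite S'E jS orbT.
apply/eqP; rewrite eq_le le_min -andbA; apply/and3P; split.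
- by apply: MMJ_subset => // k; rewrite S'E => ->; rewrite orbT.
- by rewrite /x2 /t1 (MMJ_sym d_ge0 d_sym pS' iS'); apply: MMJ_le_max.
apply: MMJ_ge_walks => // m q m0 wq; rewrite ge_min ge_max /x1 /t1 /t2.
have [p_q|p_q] := boolP (p \in q).
  move: wq; case/splitPr: p_q => q1 q2 /walk_split[/(walk_rev d_sym) wq1 wq2].
  by rewrite (MMJ_le_walk d_ge0 m0 wq1) (MMJ_le_walk d_ge0 m0 wq2) orbT.
have p_iq : p \notin i :: q.
  by rewrite in_cons (negbTE p_q) orbF; apply: contraTneq hi => <-; rewrite ltnn.
apply/orP; left; apply: (MMJ_le_walk d_ge0 m0); apply: walk_sub_in wq => k kq.
by rewrite S'E => /predU1P[kp|//]; move: p_iq; rewrite -kp kq.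
Qed.
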